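(* For every integer $n\ge 7$ there exists a $2$-connected detour covered graph of order $n$ which is not cummerbund covered. For every integer $n\ge 12$ there exists a $2$-connected cummerbund covered graph of order $n$ which is not detour covered.
   Context: All graphs are finite and simple. A detour of a graph is a longest path in the graph, and a cummerbund is a longest cycle. A graph is detour covered if every vertex lies in some detour, and cummerbund covered if every vertex lies in some cummerbund. *)

From mathcomp Require Import all_boot.
Set Implicit Arguments. Unset Strict Implicit. Unset Printing Implicit Defensive.

Definition simple_graph (T : finType) (e : rel T) : Prop :=
  symmetric e /\ irreflexive e.

(* A path: nonempty sequence of pairwise distinct vertices, consecutive ones
   adjacent. Its length (number of edges) is size p - 1. *)
Definition is_path (T : finType) (e : rel T) (p : seq T) : Prop :=
  [/\ p != [::], uniq p & sorted e p].

(* A cycle: sequence of at least 3 pairwise distinct vertices, consecutive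
   ones adjacent and last adjacent to first. Its length is size c. *)
Definition is_cycle (T : finType) (e : rel T) (c : seq T) : Prop :=
  [/\ 3 <= size c, uniq c & cycle e c].

Definition detour (T : finType) (e : rel T) (p : seq T) : Prop :=
  is_path e p /\ forall q, is_path e q -> size q <= size p.

Definition cummerbund (T : finType) (e : rel T) (c : seq T) : Prop :=
  is_cycle e c /\ forall d, is_cycle e d -> size d <= size c.

Definition detour_covered (T : finType) (e : rel T) : Prop :=
  forall v : T, exists p, detour e p /\ v \in p.

Definition cummerbund_covered (T : finType) (e : rel T) : Prop :=
  forall v : T, exists c, cummerbund e c /\ v \in c.

Definition connected_on (T : finType) (e : rel T) (S : {set T}) : Prop :=
  forall x y, x \in S -> y \in S ->
    exists p, [/\ is_path e p, head x p = x, last x p = y & all (mem S) p].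

Definition two_connected (T : finType) (e : rel T) : Prop :=
  [/\ 2 < #|T|, connected_on e setT &
      forall v : T, connected_on e (setT :\ v)].

From mathcomp Require Import all_boot zify.
Set Implicit Arguments. Unset Strict Implicit. Unset Printing Implicit Defensive.

(* All graphs below hang blocks between two nonadjacent hubs 0 and 1. An edge
   avoiding the hubs stays inside a block, so a path can only switch blocks
   through a hub: a path meets at most three blocks and a cycle at most two.

   First family (n >= 7): blocks {2}, an edge {3, 4} and a clique {5, ..., n-1}.
   The path 2-0-3-4-1-5-...-(n-1) is Hamiltonian. A cycle through 2 uses both
   hubs next to 2, so it meets only one further block and has length at most
   n - 2, while 0-3-4-1-5-...-(n-1) has length n - 1.

   Second family (n >= 13): blocks an edge {2, 3}, stars 4-{5, 6} and 7-{8, 9}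
   (the leaves attached to the hub that the centre misses) and a clique
   {10, ..., n-1}. The leaves of a star are twins of degree 2, so a cycle of
   length at least 5 takes at most two vertices of each block; hence cycles
   have length at most n - 6, attained by 0-u-w-1-10-...-(n-1) through every
   vertex. The path 5-4-6-0-10-...-(n-1)-1-8-7-9 has n - 2 vertices, whereas a
   path through 2 misses a whole block of three or more vertices.

   For n = 12 the clique is too small for this count; a separate graph is
   checked by enumerating all of its paths. Two-connectivity always follows from
   every vertex lying on a cycle through both hubs. *)

Lemma sorted_of_cycle (T : Type) (e : rel T) c : cycle e c -> sorted e c.
Proof. by case: c => //= x s; rewrite rcons_path => /andP[]. Qed.

Lemma cycle_delete (T : eqType) (e : rel T) c v : uniq c -> cycle e c ->
  exists s, [/\ sorted e s, v \notin s & {in c, forall x, x != v -> x \in s}].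
Proof.
move=> uc cc; have [vc|vNc] := boolP (v \in c); last first.
  by exists c; split=> //; exact: sorted_of_cycle.
case: (rot_to vc) => i s rot_c.
have : uniq (v :: s) by rewrite -rot_c rot_uniq.
have : cycle e (v :: s) by rewrite -rot_c rot_cycle.
rewrite /= rcons_path => /andP[vs _] /andP[vNs _].
exists s; split=> // [|x xc xv]; first exact: path_sorted vs.
by move: xc; rewrite -(mem_rot i) rot_c inE (negbTE xv).
Qed.

(** * Two-connectivity from cycles *)

Section Connectivity.

Variables (T : finType) (e : rel T).
Hypothesis e_sym : symmetric e.

Definition within (S : {set T}) : rel T := [rel x y | [&& x \in S, y \in S & e x y]].

Lemma connect_within_sym (S : {set T}) : connect_sym (within S).
Proof.
by apply: sym_connect_sym => x y; rewrite /within /= e_sym; case: (x \in S); case: (y \in S).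
Qed.

Lemma connected_on_hub (S : {set T}) h :
  h \in S -> {in S, forall x, connect (within S) x h} -> connected_on e S.
Proof.
move=> hS toh x y xS yS.
have /connectP[p pw ->] : connect (within S) x y.
  by rewrite (connect_trans (toh x xS)) // connect_within_sym toh.
case/shortenP: pw => q qw uq _; exists (x :: q); split=> //.
  by split=> //=; apply: sub_path qw => u v /and3P[].
elim: q x qw xS {uq} => [|z q IH] x /=; first by move=> _ ->.
by case/andP=> /and3P[-> zS _] /IH /(_ zS).
Qed.

Lemma connect_within_sorted (S : {set T}) s : sorted e s -> all (mem S) s ->
  {in s &, forall x y, connect (within S) x y}.
Proof.
case: s => // z s zs zsS x y xs ys.
have zw : path (within S) z s.
  by apply: sub_in_path zsS zs => u v uS vS uv; rewrite /within /= uS vS uv.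
rewrite (connect_trans _ (path_connect zw ys)) //.
by rewrite connect_within_sym (path_connect zw xs).
Qed.

(* A cycle through both [a] and [b] survives, as a path, the removal of any
   vertex, and keeps one of [a], [b] as a common meeting point. *)
Lemma two_connected_of_cycles a b : 2 < #|T| -> a != b ->
  (forall x, exists c, [/\ uniq c, cycle e c & {subset [:: x; a; b] <= c}]) ->
  two_connected e.
Proof.
move=> T3 ab cyc; split=> // [|v].
  apply: (@connected_on_hub _ a) => [|x _]; first exact: in_setT.
  have [c [_ cc sub]] := cyc x.
  apply: (connect_within_sorted (sorted_of_cycle cc)).
  - by apply/allP => y _; rewrite /= in_setT.
  - by apply: sub; rewrite inE eqxx.
  - by apply: sub; rewrite !inE eqxx orbT.
pose h := if v == a then b else a.
have hv : h != v by rewrite /h; case: (eqVneq v a) => [->|]; rewrite eq_sym.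
apply: (@connected_on_hub _ h) => [|x]; first by rewrite !inE hv.
rewrite !inE andbT => xv.
have [c [uc cc sub]] := cyc x.
have [s [ss vNs cs]] := cycle_delete v uc cc.
apply: (connect_within_sorted ss).
- by apply/allP => y ys; rewrite /= !inE andbT; apply: contraNneq vNs => <-.
- by apply: cs xv; apply: sub; rewrite inE eqxx.
- by apply: cs hv; apply: sub; rewrite /h; case: ifP; rewrite !inE eqxx ?orbT.
Qed.

End Connectivity.

Lemma detour_covered_of_spanning_path (T : finType) (e : rel T) p :
  is_path e p -> (forall v, v \in p) -> detour_covered e.
Proof.
move=> pp cover v; exists p; split=> //; split=> // q [_ uq _].
exact: uniq_leq_size uq (fun x _ => cover x).
Qed.

Definition ord_rel n (r : rel nat) : rel 'I_n := fun i j => r i j.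

Definition path_below (r : rel nat) n s :=
  [/\ s != [::], uniq s, sorted r s & all (gtn n) s].

Definition cycle_below (r : rel nat) n c :=
  [/\ 3 <= size c, uniq c, cycle r c & all (gtn n) c].

Lemma path_below_of_cycle r n c : cycle_below r n c -> path_below r n c.
Proof. by case=> c3 uc /sorted_of_cycle cs cn; split=> //; case: c c3 {uc cs cn}. Qed.

Lemma simple_ord_rel n r : symmetric r -> irreflexive r -> simple_graph (@ord_rel n r).
Proof. by move=> r_sym r_irr; split=> [x y|x]; [exact: r_sym | exact: r_irr]. Qed.

Lemma all_val_below n (p : seq 'I_n) : all (gtn n) (map val p).
Proof. by apply/allP => _ /mapP[i _ ->]; exact: ltn_ord. Qed.

Lemma lift_below n s : all (gtn n) s -> exists p : seq 'I_n, map val p = s.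
Proof.
elim: s => [|x s IH] /=; first by exists [::].
by case/andP=> xn /IH[p <-]; exists (Ordinal xn :: p).
Qed.

Lemma is_path_ord_rel n r (p : seq 'I_n) :
  is_path (ord_rel r) p <-> path_below r n (map val p).
Proof.
rewrite /is_path /path_below (map_inj_uniq val_inj) sorted_map all_val_below.
by case: p => [|i p]; split=> -[].
Qed.

Lemma is_cycle_ord_rel n r (c : seq 'I_n) :
  is_cycle (ord_rel r) c <-> cycle_below r n (map val c).
Proof.
rewrite /is_cycle /cycle_below (map_inj_uniq val_inj) cycle_map size_map.
by rewrite all_val_below; split=> -[].
Qed.

Lemma lift_path_below n r s : path_below r n s ->
  exists2 p : seq 'I_n, is_path (ord_rel r) p & map val p = s.
Proof.
move=> sp; have [p pE] := lift_below (let: And4 _ _ _ sn := sp in sn).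
by exists p => //; apply/is_path_ord_rel; rewrite pE.
Qed.

Lemma lift_cycle_below n r c : cycle_below r n c ->
  exists2 d : seq 'I_n, is_cycle (ord_rel r) d & map val d = c.
Proof.
move=> cc; have [d dE] := lift_below (let: And4 _ _ _ cn := cc in cn).
by exists d => //; apply/is_cycle_ord_rel; rewrite dE.
Qed.

Lemma two_connected_ord_rel n r (cyc : nat -> seq nat) : symmetric r -> 2 < n ->
  (forall x, x < n -> cycle_below r n (cyc x) /\ {subset [:: x; 0; 1] <= cyc x}) ->
  two_connected (@ord_rel n r).
Proof.
move=> r_sym n3 cyc_ok; have n1 : 1 < n by lia.
have n0 : 0 < n by lia.
apply: (two_connected_of_cycles _ (a := Ordinal n0) (b := Ordinal n1)) => //.
- by move=> x y; exact: r_sym.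
- by rewrite card_ord.
move=> x; have [/lift_cycle_below[c [_ uc cc] cE] sub] := cyc_ok x (ltn_ord x).
exists c; split=> // y /(map_f val) /sub.
by rewrite -cE mem_map //; exact: val_inj.
Qed.

Lemma cummerbund_covered_ord_rel n r m (cyc : nat -> seq nat) :
  (forall c, cycle_below r n c -> size c <= m) ->
  (forall x, x < n -> [/\ cycle_below r n (cyc x), m <= size (cyc x) & x \in cyc x]) ->
  cummerbund_covered (@ord_rel n r).
Proof.
move=> bound cyc_ok v; have [/lift_cycle_below[c cc cE] mc vc] := cyc_ok v (ltn_ord v).
exists c; split; last by rewrite -(mem_map val_inj) cE.
split=> // d /is_cycle_ord_rel /bound; rewrite size_map => dm.
by rewrite (leq_trans dm) // -(size_map val) cE.
Qed.

Lemma not_cummerbund_covered_ord_rel n r v c : v < n -> cycle_below r n c ->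
  (forall d, cycle_below r n d -> v \in d -> size d < size c) ->
  ~ cummerbund_covered (@ord_rel n r).
Proof.
move=> vn /lift_cycle_below[c' c'c c'E] short /(_ (Ordinal vn))[d [[dc dmax] vd]].
move/is_cycle_ord_rel/short: dc => /(_ (map_f val vd)).
by rewrite size_map -c'E size_map ltnNge dmax.
Qed.

Lemma detour_covered_ord_rel n r s : path_below r n s ->
  (forall x, x < n -> x \in s) -> detour_covered (@ord_rel n r).
Proof.
move=> /lift_path_below[p pp pE] cover.
apply: detour_covered_of_spanning_path pp _ => v.
by move: (cover v (ltn_ord v)); rewrite -pE (mem_map val_inj).
Qed.

Lemma not_detour_covered_ord_rel n r v s : v < n -> path_below r n s ->
  (forall t, path_below r n t -> v \in t -> size t < size s) ->
  ~ detour_covered (@ord_rel n r).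
Proof.
move=> vn /lift_path_below[p pp pE] short /(_ (Ordinal vn))[q [[qp qmax] vq]].
move/is_path_ord_rel/short: qp => /(_ (map_f val vq)).
by rewrite size_map -pE size_map ltnNge qmax.
Qed.

(** * Blocks separated by a cut set *)

Lemma count_le_mem (T : eqType) (a : pred T) s L : uniq s ->
  {in s, forall x, a x -> x \in L} -> count a s <= count (mem s) L.
Proof.
move=> us sL; rewrite -!size_filter uniq_leq_size ?filter_uniq // => x.
by rewrite !mem_filter => /andP[ax xs]; apply/andP; split; [exact: xs | exact: sL].
Qed.

Lemma count_le_size (T : eqType) (a : pred T) s L : uniq s ->
  {in s, forall x, a x -> x \in L} -> count a s <= size L.
Proof. by move=> us /(count_le_mem us)/leq_trans; apply; exact: count_size. Qed.

Lemma count_le_two (T : eqType) (a : pred T) s x y z : uniq s ->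
  ~~ ((y \in s) && (z \in s)) -> {in s, forall v, a v -> v \in [:: x; y; z]} ->
  count a s <= 2.
Proof.
move=> us yz /(count_le_mem us)/leq_trans; apply => /=.
by move: yz; case: (x \in s); case: (y \in s); case: (z \in s).
Qed.

Lemma count_le_interval (a : pred nat) s lo hi : uniq s ->
  {in s, forall x, a x -> lo <= x < hi} -> count a s <= hi - lo.
Proof.
move=> us sI; rewrite -(size_iota lo (hi - lo)); apply: count_le_size us _ => x xs ax.
by rewrite mem_iota; have := sI x xs ax; lia.
Qed.

Section Separator.

Variables (T : eqType) (r : rel T) (cut : pred T) (cls : T -> nat).
Hypothesis cls_edge : forall x y, r x y -> ~~ cut x -> ~~ cut y -> cls x = cls y.

Definition in_class k x := ~~ cut x && (cls x == k).
Definition visits s k := has (in_class k) s.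
Definition classes s := undup [seq cls x | x <- s & ~~ cut x].

Lemma size_by_class s ks : uniq ks -> {in s, forall x, ~~ cut x -> cls x \in ks} ->
  size s = count cut s + \sum_(k <- ks) count (in_class k) s.
Proof.
move=> uks; elim: s => [_|x s IH sks]; first by rewrite big1.
have {}IH : size s = count cut s + \sum_(k <- ks) count (in_class k) s.
  by apply: IH => y ys; apply: sks; rewrite inE ys orbT.
have one_class : \sum_(k <- ks) in_class k x = ~~ cut x.
  transitivity (count (in_class^~ x) ks).
    by rewrite -sum1_count [RHS]big_mkcond; apply: eq_bigr => k _; case: in_class.
  rewrite (@eq_count _ _ (fun k => ~~ cut x && (k == cls x))) => [|k]; last first.
    by rewrite /in_class eq_sym.
  have [cx|ncx] := boolP (cut x); first by rewrite count_pred0.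
  by rewrite count_uniq_mem // sks // mem_head.
rewrite /= big_split /= one_class IH; case: (cut x) => /=; lia.
Qed.

Lemma visits_classes s k : visits s k -> k \in classes s.
Proof. by case/hasP=> x xs /andP[cx /eqP <-]; rewrite mem_undup map_f // mem_filter cx. Qed.

Lemma count_visits_le s ks : uniq ks -> count (visits s) ks <= size (classes s).
Proof.
move=> uks; rewrite -size_filter uniq_leq_size ?filter_uniq // => k.
by rewrite mem_filter => /andP[/visits_classes].
Qed.

(* Consecutive vertices outside [cut] share their class, so every new class
   along a path is preceded by a vertex of [cut]. *)
Lemma size_classes_path x s : path r x s ->
  size (classes (x :: s)) <= count cut (x :: s) + ~~ cut x.
Proof.
elim: s x => [|y s IH] x /=; first by rewrite /classes /=; case: (cut x).
case/andP=> rxy /IH; rewrite /classes /=.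
case cx: (cut x) => /=; first by case: (cut y) => /=; lia.
case cy: (cut y) => /=; first by case: ifP => _ /=; lia.
by rewrite (cls_edge rxy) ?cx ?cy // inE eqxx /=; case: ifP => _ /=; lia.
Qed.

Lemma count_visits_path x s ks : path r x s -> uniq ks ->
  count (visits (x :: s)) ks <= (count cut (x :: s)).+1.
Proof.
move=> ps /(count_visits_le (x :: s)) /leq_trans; apply.
by rewrite (leq_trans (size_classes_path ps)) // addnC; case: (~~ cut x).
Qed.

Lemma count_visits_cycle c ks : cycle r c -> uniq ks ->
  count (visits c) ks <= maxn 1 (count cut c).
Proof.
move=> cc uks; have [/hasP[x xc cx]|nocut] := boolP (has cut c); last first.
  case: c cc nocut => [_ _|x s cc nocut]; first by rewrite (@eq_count _ _ pred0) ?count_pred0.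
  have ps : path r x s by move: cc; rewrite /= rcons_path => /andP[].
  have cut0 : count cut (x :: s) = 0 by apply/eqP; rewrite -leqn0 leqNgt -has_count.
  by have := count_visits_path ps uks; rewrite cut0.
case: (rot_to xc) => i s rot_c.
have /permP cut_rot : perm_eq (rot i c) c by rewrite perm_rot.
have vis_rot : count (visits (rot i c)) ks = count (visits c) ks.
  by apply: eq_count => k; exact: has_rot.
have : path r x s by move: cc; rewrite -(rot_cycle i) rot_c /= rcons_path => /andP[].
move/size_classes_path; rewrite cx addn0 -rot_c cut_rot => le_cut.
by rewrite -vis_rot (leq_trans (count_visits_le _ uks)) // (leq_trans le_cut) ?leq_maxr.
Qed.

End Separator.

(* Two vertices whose neighbourhoods lie in [{p, q}] are isolated once [p] and
   [q] are cut off, so a cycle through both of them uses nothing else. *)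
Lemma cycle_with_twins (T : eqType) (r : rel T) c p q u w : symmetric r ->
  uniq c -> cycle r c -> u \in c -> w \in c -> u != w ->
  u \notin [:: p; q] -> w \notin [:: p; q] ->
  (forall z, r u z -> z \in [:: p; q]) -> (forall z, r w z -> z \in [:: p; q]) ->
  size c <= 4.
Proof.
move=> r_sym uc cc uc' wc uw uN wN Nu Nw.
pose cut : pred T := fun z => z \in [:: p; q].
pose cls z := if z == u then 0 else if z == w then 1 else 2.
have off_twins z z' : r z z' -> ~~ cut z' -> (z != u) && (z != w).
  by move=> rzz' z'N; apply/andP; split; apply: contraNneq z'N => zE;
    [apply: Nu | apply: Nw]; rewrite -zE.
have cls_edge x y : r x y -> ~~ cut x -> ~~ cut y -> cls x = cls y.
  move=> rxy xN yN; rewrite /cls.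
  case/andP: (off_twins _ _ rxy yN) => /negbTE-> /negbTE->.
  by rewrite r_sym in rxy; case/andP: (off_twins _ _ rxy xN) => /negbTE-> /negbTE->.
have cut2 : count cut c <= 2 by exact: count_le_size uc (fun z _ zc => zc).
have no_rest : ~~ visits cut cls c 2.
  have := count_visits_cycle cls_edge (ks := [:: 0; 1; 2]) cc isT; rewrite /= /visits.
  have -> : has (in_class cut cls 0) c by apply/hasP; exists u; rewrite // /in_class /cls eqxx uN.
  have -> : has (in_class cut cls 1) c.
    by apply/hasP; exists w; rewrite // /in_class /cls [w == u]eq_sym (negbTE uw) eqxx wN.
  lia.
rewrite -(count_predT c) (@count_le_size _ _ _ [:: p; q; u; w]) // => z zc _.
apply: contraNT no_rest; rewrite !inE => /norP[zp /norP[zq /norP[zu zw]]].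
by apply/hasP; exists z; rewrite // /in_class /cls /cut !inE (negbTE zu) (negbTE zw) negb_or zp zq.
Qed.

Lemma path_iota (r : rel nat) a m :
  (forall i, a <= i -> r i i.+1) -> path r a (iota a.+1 m).
Proof. by elim: m a => [|m IH] a step //=; rewrite step // IH // => i ai; apply: step; lia. Qed.

Lemma last_iota a m : last a (iota a.+1 m) = a + m.
Proof. by elim: m a => [|m IH] a /=; rewrite ?addn0 ?IH ?addnS. Qed.

Lemma cycle_cat_iota (r : rel nat) x s a m : 0 < m -> path r x s -> r (last x s) a ->
  (forall i, a <= i -> r i i.+1) -> r (a + m).-1 x -> cycle r (x :: s ++ iota a m).
Proof.
case: m => // m _ ps sa step back.
rewrite /= rcons_cat cat_path ps /= sa rcons_path path_iota // last_iota.
by move: back; rewrite addnS.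
Qed.

(** * The detour covered family *)

Definition hub (x : nat) := x <= 1.

Definition block1 (x : nat) := (3 <= x) + (5 <= x).

Definition r1 : rel nat := fun i j => (i != j) &&
  [|| hub i && ~~ hub j, hub j && ~~ hub i | [&& ~~ hub i, ~~ hub j & block1 i == block1 j]].

Lemma r1_sym : symmetric r1.
Proof. by move=> i j; rewrite /r1 /hub /block1; apply/idP/idP; lia. Qed.

Lemma r1_irr : irreflexive r1.
Proof. by move=> i; rewrite /r1 eqxx. Qed.

Lemma r1_block x y : r1 x y -> ~~ hub x -> ~~ hub y -> block1 x = block1 y.
Proof. by rewrite /r1 /hub /block1; lia. Qed.

Definition cycle1 n := [:: 0; 3; 4; 1] ++ iota 5 (n - 5).

Lemma cycle1_below n : 7 <= n -> cycle_below r1 n (cycle1 n).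
Proof.
rewrite /cycle1 => n7; split.
- by rewrite size_cat size_iota /=; lia.
- rewrite cat_uniq iota_uniq /= andbT.
  by apply/hasPn => x; rewrite mem_iota !inE; lia.
- apply: (@cycle_cat_iota _ 0 [:: 3; 4; 1]) => //= [|i i5]; first lia.
  by rewrite /r1 /hub /block1; lia.
- by apply/allP => x; rewrite mem_cat mem_iota !inE; lia.
Qed.

Lemma size_cycle1 n : 7 <= n -> size (cycle1 n) = n - 1.
Proof. by rewrite /cycle1 size_cat size_iota /=; lia. Qed.

Lemma mem_cycle1 n x : 5 <= n -> (x \in cycle1 n) = (x < n) && (x != 2).
Proof. by rewrite /cycle1 mem_cat mem_iota !inE; lia. Qed.

Lemma size_r1_cycle_through2 n c : 7 <= n -> cycle_below r1 n c -> 2 \in c -> size c <= n - 2.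
Proof.
move=> n7 [_ uc cc cn] c2.
have := count_visits_cycle r1_block (ks := [:: 0; 1; 2]) cc isT.
rewrite (@size_by_class _ hub block1 c [:: 0; 1; 2]) // => [|x _]; last first.
  by rewrite /hub /block1 !inE; lia.
have hubs : count hub c <= 2 - 0.
  by apply: count_le_interval uc _ => x _; rewrite /hub; lia.
have b0 : count (in_class hub block1 0) c <= 3 - 2.
  by apply: count_le_interval uc _ => x _; rewrite /in_class /hub /block1; lia.
have b1 : count (in_class hub block1 1) c <= 5 - 3.
  by apply: count_le_interval uc _ => x _; rewrite /in_class /hub /block1; lia.
have b2 : count (in_class hub block1 2) c <= n - 5.
  by apply: count_le_interval uc _ => x /(allP cn); rewrite /in_class /hub /block1 /=; lia.
have v0 : visits hub block1 c 0 by apply/hasP; exists 2.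
move: hubs b0 b1 b2 v0; rewrite /visits /= !big_cons big_nil !has_count; lia.
Qed.

Lemma detour_but_not_cummerbund_covered n : 7 <= n -> exists e : rel 'I_n,
  [/\ simple_graph e, two_connected e, detour_covered e & ~ cummerbund_covered e].
Proof.
move=> n7; exists (ord_rel r1); split.
- exact: simple_ord_rel r1_sym r1_irr.
- pose cyc x := if x == 2 then [:: 0; 2; 1; 3] else cycle1 n.
  apply: (two_connected_ord_rel (cyc := cyc)) r1_sym _ _ => [|x xn]; first lia.
  rewrite /cyc; case: eqVneq => [->|x2].
    split; first by split=> //=; lia.
    by move=> y; rewrite !inE => /or3P[] /eqP->.
  split; first exact: cycle1_below.
  move=> y yin; rewrite mem_cycle1; last lia.
  by move: yin; rewrite !in_cons in_nil; lia.
- have [c3 uc cc cn] := cycle1_below n7.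
  apply: (@detour_covered_ord_rel _ _ (2 :: cycle1 n)) => [|x xn].
    split=> //.
    - by rewrite cons_uniq uc mem_cycle1 //; lia.
    - by move: (sorted_of_cycle cc); rewrite /cycle1 /= => ->.
    - by apply/andP; split; [apply: leq_trans n7 | exact: cn].
  by rewrite inE mem_cycle1 //; case: (eqVneq x 2) => //= _; lia.
- apply: (not_cummerbund_covered_ord_rel (v := 2) (c := cycle1 n)) => [||d dc d2].
  + lia.
  + exact: cycle1_below.
  + by rewrite size_cycle1 // (leq_ltn_trans (size_r1_cycle_through2 n7 dc d2)) //; lia.
Qed.

(** * The cummerbund covered family *)

Definition adj2 (i j : nat) : bool :=
  [|| (i == 0) && [|| j == 2, j == 3, j == 5, j == 6, j == 7 | 10 <= j],
      (i == 1) && [|| j == 2, j == 3, j == 4, j == 8, j == 9 | 10 <= j],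
      (i == 2) && (j == 3), (i == 4) && ((j == 5) || (j == 6)),
      (i == 7) && ((j == 8) || (j == 9)) | (10 <= i) && (10 <= j)].

Definition r2 : rel nat := fun i j => (i != j) && (adj2 i j || adj2 j i).

Definition block2 (x : nat) := (4 <= x) + (7 <= x) + (10 <= x).

Lemma r2_sym : symmetric r2.
Proof. by move=> i j; rewrite /r2 eq_sym orbC. Qed.

Lemma r2_irr : irreflexive r2.
Proof. by move=> i; rewrite /r2 eqxx. Qed.

Lemma r2_block x y : r2 x y -> ~~ hub x -> ~~ hub y -> block2 x = block2 y.
Proof. by rewrite /r2 /adj2 /hub /block2; lia. Qed.

(* The pair of vertices between the hubs on a longest cycle through [x]. *)
Definition bridge2 (x : nat) : nat * nat :=
  if 4 <= x <= 5 then (5, 4) else if x == 6 then (6, 4)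
  else if 7 <= x <= 8 then (7, 8) else if x == 9 then (7, 9) else (2, 3).

Definition cycle2 n x := let: (u, w) := bridge2 x in [:: 0; u; w; 1] ++ iota 10 (n - 10).

Lemma cycle2_below n x : 11 <= n -> cycle_below r2 n (cycle2 n x).
Proof.
rewrite /cycle2 => n11.
have : let: (u, w) := bridge2 x in
    [&& r2 0 u, r2 u w, r2 w 1, 2 <= u <= 9 & 2 <= w <= 9] && (u != w).
  by rewrite /bridge2; do ?case: ifP.
case: (bridge2 x) => u w /andP[/and5P[r0u ruw rw1 u29 w29] uw]; split.
- by rewrite size_cat size_iota /=; lia.
- rewrite cat_uniq iota_uniq /= !inE; apply/and3P; split=> //; first lia.
  by apply/hasPn => y; rewrite mem_iota !inE; lia.
- apply: (@cycle_cat_iota _ 0 [:: u; w; 1]) => //= [||i i9|]; first lia.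
  + by rewrite r0u ruw rw1.
  + by rewrite /r2 /adj2; lia.
  + by rewrite /r2 /adj2; lia.
- by apply/allP => y; rewrite mem_cat mem_iota !inE; lia.
Qed.

Lemma size_cycle2 n x : 10 <= n -> size (cycle2 n x) = n - 6.
Proof. by rewrite /cycle2; case: (bridge2 x) => u w; rewrite size_cat size_iota /=; lia. Qed.

Lemma mem_cycle2 n x : x < n -> {subset [:: x; 0; 1] <= cycle2 n x}.
Proof.
move=> xn y; rewrite /cycle2 /bridge2 !inE.
by do ?case: ifP; rewrite mem_cat mem_iota !inE; lia.
Qed.

Definition path2 n := [:: 5; 4; 6; 0] ++ iota 10 (n - 10) ++ [:: 1; 8; 7; 9].

Lemma path2_below n : 11 <= n -> path_below r2 n (path2 n).
Proof.
rewrite /path2 => n11; split=> //.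
- rewrite cat_uniq cat_uniq iota_uniq /= !andbT !mem_iota.
  by apply/andP; split; [apply/hasPn => y; rewrite mem_cat mem_iota !inE|]; lia.
- have -> : n - 10 = (n - 11).+1 by lia.
  rewrite /= cat_path /= path_iota ?last_iota => [|i i10]; rewrite /r2 /adj2; lia.
- by apply/allP => y; rewrite !mem_cat mem_iota !inE; lia.
Qed.

Lemma size_path2 n : 10 <= n -> size (path2 n) = n - 2.
Proof. by rewrite /path2 !size_cat size_iota /=; lia. Qed.

Lemma size_r2_path_through2 n s : 13 <= n -> path_below r2 n s -> 2 \in s -> size s <= n - 3.
Proof.
case: s => [//|x s] n13 [_ us ps sn] s2.
have := count_visits_path r2_block (ks := [:: 0; 1; 2; 3]) ps isT.
move: (x :: s) us sn s2 => {ps} t ut tn t2.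
rewrite (@size_by_class _ hub block2 t [:: 0; 1; 2; 3]) // => [|y _]; last first.
  by rewrite /hub /block2 !inE; lia.
have hubs : count hub t <= 2 - 0.
  by apply: count_le_interval ut _ => y _; rewrite /hub; lia.
have b0 : count (in_class hub block2 0) t <= 4 - 2.
  by apply: count_le_interval ut _ => y _; rewrite /in_class /hub /block2; lia.
have b1 : count (in_class hub block2 1) t <= 7 - 4.
  by apply: count_le_interval ut _ => y _; rewrite /in_class /hub /block2; lia.
have b2 : count (in_class hub block2 2) t <= 10 - 7.
  by apply: count_le_interval ut _ => y _; rewrite /in_class /hub /block2; lia.
have b3 : count (in_class hub block2 3) t <= n - 10.
  by apply: count_le_interval ut _ => y /(allP tn); rewrite /in_class /hub /block2 /=; lia.
have v0 : visits hub block2 t 0 by apply/hasP; exists 2.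
move: hubs b0 b1 b2 b3 v0; rewrite /visits /= !big_cons big_nil !has_count; lia.
Qed.

Lemma size_r2_cycle n c : 12 <= n -> cycle_below r2 n c -> size c <= n - 6.
Proof.
move=> n12 [_ uc cc cn]; have [|long] := leqP (size c) 4; first lia.
have no_twins u w p q : u != w -> u \notin [:: p; q] -> w \notin [:: p; q] ->
    (forall z, r2 u z -> z \in [:: p; q]) -> (forall z, r2 w z -> z \in [:: p; q]) ->
    ~~ ((u \in c) && (w \in c)).
  move=> uw uN wN Nu Nw; apply/andP => -[uc' wc].
  by have := cycle_with_twins r2_sym uc cc uc' wc uw uN wN Nu Nw; lia.
have no56 : ~~ ((5 \in c) && (6 \in c)).
  by apply: (@no_twins _ _ 0 4) => // z; rewrite /r2 /adj2 !inE; lia.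
have no89 : ~~ ((8 \in c) && (9 \in c)).
  by apply: (@no_twins _ _ 1 7) => // z; rewrite /r2 /adj2 !inE; lia.
have := count_visits_cycle r2_block (ks := [:: 0; 1; 2; 3]) cc isT.
rewrite (@size_by_class _ hub block2 c [:: 0; 1; 2; 3]) // => [|y _]; last first.
  by rewrite /hub /block2 !inE; lia.
have hubs : count hub c <= 2 - 0.
  by apply: count_le_interval uc _ => y _; rewrite /hub; lia.
have b0 : count (in_class hub block2 0) c <= 4 - 2.
  by apply: count_le_interval uc _ => y _; rewrite /in_class /hub /block2; lia.
have b1 : count (in_class hub block2 1) c <= 2.
  by apply: (count_le_two (x := 4) uc no56) => y _; rewrite /in_class /hub /block2 !inE; lia.
have b2 : count (in_class hub block2 2) c <= 2.
  by apply: (count_le_two (x := 7) uc no89) => y _; rewrite /in_class /hub /block2 !inE; lia.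
have b3 : count (in_class hub block2 3) c <= n - 10.
  by apply: count_le_interval uc _ => y /(allP cn); rewrite /in_class /hub /block2 /=; lia.
move: hubs b0 b1 b2 b3; rewrite /visits /= !big_cons big_nil !has_count; lia.
Qed.

Lemma cummerbund_but_not_detour_covered n : 13 <= n -> exists e : rel 'I_n,
  [/\ simple_graph e, two_connected e, cummerbund_covered e & ~ detour_covered e].
Proof.
move=> n13; exists (ord_rel r2); split.
- exact: simple_ord_rel r2_sym r2_irr.
- apply: (two_connected_ord_rel (cyc := cycle2 n)) r2_sym _ _ => [|x xn]; first lia.
  by split; [apply: cycle2_below; lia | exact: mem_cycle2].
- apply: (cummerbund_covered_ord_rel (m := n - 6) (cyc := cycle2 n)) => [c|x xn].
    by apply: size_r2_cycle; lia.
  split; [apply: cycle2_below; lia | rewrite size_cycle2 //; lia |].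
  by apply: mem_cycle2 xn _ (mem_head _ _).
- apply: (not_detour_covered_ord_rel (v := 2) (s := path2 n)) => [||t tp t2].
  + lia.
  + by apply: path2_below; lia.
  + by rewrite size_path2 ?(leq_ltn_trans (size_r2_path_through2 _ tp t2)) //; lia.
Qed.

(** * Twelve vertices *)

Definition extend_paths (r : rel nat) N (P : seq (seq nat)) : seq (seq nat) :=
  [seq x :: p | p <- P, x <- [seq x <- iota 0 N | (x \notin p) && r x (head 0 p)]].

Definition enum_paths (r : rel nat) N k : seq (seq nat) :=
  iter k (extend_paths r N) [seq [:: x] | x <- iota 0 N].

Lemma mem_enum_paths r N s : path_below r N s -> s \in enum_paths r N (size s).-1.
Proof.
elim: s => [|x t IH] [//= _ /andP[xt ut] st /andP[xN tN]].
case: t IH xt ut st tN => [|y t] IH xt ut st tN.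
  by apply: map_f; rewrite mem_iota.
have /IH yt : path_below r N (y :: t) by split=> //; exact: path_sorted st.
apply/allpairsPdep; exists (y :: t), x; split=> //.
by rewrite mem_filter xt mem_iota /=; case/andP: st => -> _; lia.
Qed.

Lemma path_below_exhaustive r N (P : pred (seq nat)) :
  all (fun k => all P (enum_paths r N k)) (iota 0 N) ->
  forall s, path_below r N s -> P s.
Proof.
move=> /allP chk s sp; have [s0 us _ sN] := sp.
have : size s <= size (iota 0 N).
  by apply: uniq_leq_size us _ => x /(allP sN); rewrite mem_iota.
rewrite size_iota => sz; have k_range : (size s).-1 \in iota 0 N.
  by rewrite mem_iota; case: s s0 {us sN sp sz} (sz) => //= x s _; lia.
exact: (allP (chk _ k_range)) _ (mem_enum_paths sp).
Qed.

Definition edges12 : seq (nat * nat) :=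
  [:: (0, 2); (0, 3); (0, 5); (0, 6); (0, 7); (0, 10); (0, 11);
      (1, 2); (1, 3); (1, 4); (1, 8); (1, 9); (1, 10); (1, 11);
      (2, 3); (4, 6); (4, 7); (5, 8); (7, 8); (7, 9); (10, 11)].

Definition r12 : rel nat := fun i j =>
  (i != j) && (((i, j) \in edges12) || ((j, i) \in edges12)).

Lemma r12_sym : symmetric r12.
Proof. by move=> i j; rewrite /r12 eq_sym orbC. Qed.

Lemma r12_irr : irreflexive r12.
Proof. by move=> i; rewrite /r12 eqxx. Qed.

Definition r12_bounds (s : seq nat) :=
  ((9 \in s) ==> (size s <= 10)) && (cycle r12 s ==> (size s <= 8)).

Lemma r12_bounds_ok s : path_below r12 12 s -> r12_bounds s.
Proof. by apply: path_below_exhaustive; vm_compute. Qed.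

Definition cycle12 (x : nat) : seq nat :=
  if x \in [:: 6; 9] then [:: 0; 2; 3; 1; 9; 7; 4; 6]
  else if 10 <= x then [:: 0; 10; 11; 1; 4; 7; 8; 5]
  else [:: 0; 2; 3; 1; 4; 7; 8; 5].

Lemma cycle12_spec x : x < 12 ->
  [/\ cycle_below r12 12 (cycle12 x), size (cycle12 x) = 8
    & {subset [:: x; 0; 1] <= cycle12 x}].
Proof.
rewrite /cycle12 !inE => x12.
by case: ifP => [x69|x69]; [|case: ifP => x10]; split=> //; move=> y; rewrite !inE; lia.
Qed.

Definition path12 := [:: 2; 3; 1; 10; 11; 0; 5; 8; 7; 4; 6].

Lemma cummerbund_but_not_detour_covered12 : exists e : rel 'I_12,
  [/\ simple_graph e, two_connected e, cummerbund_covered e & ~ detour_covered e].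
Proof.
exists (ord_rel r12); split.
- exact: simple_ord_rel r12_sym r12_irr.
- apply: (two_connected_ord_rel (cyc := cycle12)) r12_sym _ _ => // x /cycle12_spec.
  by case.
- apply: (cummerbund_covered_ord_rel (m := 8) (cyc := cycle12)) => [c cb|x /cycle12_spec].
    have /andP[_ /implyP] := r12_bounds_ok (path_below_of_cycle cb).
    by apply; case: cb.
  by case=> cb -> sub; split=> //; apply: sub; rewrite inE eqxx.
- apply: (not_detour_covered_ord_rel (v := 9) (s := path12)) => // t tp t9.
  by have /andP[/implyP/(_ t9)] := r12_bounds_ok tp.
Qed.

Theorem theorem1 :
  (forall n : nat, 7 <= n ->
     exists e : rel 'I_n,
       [/\ simple_graph e, two_connected e, detour_covered e
         & ~ cummerbund_covered e]) /\
  (forall n : nat, 12 <= n ->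
     exists e : rel 'I_n,
       [/\ simple_graph e, two_connected e, cummerbund_covered e
         & ~ detour_covered e]).
Proof.
split; first exact: detour_but_not_cummerbund_covered.
move=> n n12; have [->|n_ne12] := eqVneq n 12.
  exact: cummerbund_but_not_detour_covered12.
by apply: cummerbund_but_not_detour_covered; lia.
Qed.
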